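(* Let $G=(V,E,\mathcal{W})$ be a matrix-weighted network as described in the context. Then $G$ is coherent if and only if there is a partition $\{V_1,\dots,V_{l_p}\}$ of $V$ such that (i) every edge $(v_i,v_j)\in E$ with $v_i,v_j$ in the same part has transformation $\mathbf{R}_{ij}=\mathbf{I}$; (ii) for every ordered pair of parts $(V_a,V_b)$, all edges $(v_i,v_j)\in E$ with $v_i\in V_a$, $v_j\in V_b$ have the same transformation $\mathbf{R}_{ij}$; and (iii) considering each part as a super node, joined by a directed edge from $V_a$ to $V_b$ ($a\ne b$) carrying this common transformation whenever such edges exist, the transformation of every directed cycle of super nodes is $\mathbf{I}$.
   Context: A matrix-weighted network (MWN) is $G=(V,E,\mathcal{W})$ with node set $V=\{v_1,\dots,v_n\}$ and edge set $E\subset V\times V$, whose underlying graph is connected. For a fixed dimension $n_d$, each ordered pair $(i,j)$ carries a matrix $\mathbf{W}_{ij}\in\mathbb{R}^{n_d\times n_d}$, with $\mathbf{W}_{ij}=0$ if and only if $(v_i,v_j)\notin E$, and $\mathbf{W}_{ij}=\mathbf{W}_{ji}^T$ for all $i,j$. Write $w_{ij}=\|\mathbf{W}_{ij}\|_2$ and, for edges, $\mathbf{R}_{ij}=\mathbf{W}_{ij}/w_{ij}$, the transformation of the edge $(v_i,v_j)$; $\mathbf{I}$ denotes the $n_d\times n_d$ identity. The transformation of a directed path or directed cycle with consecutive edges $e_1,\dots,e_k$ is the product $\mathbf{R}(e_1)\mathbf{R}(e_2)\cdots\mathbf{R}(e_k)$; a directed cycle is a sequence of edges $(v_{i_1},v_{i_2}),(v_{i_2},v_{i_3}),\dots,(v_{i_l},v_{i_1})\in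 E$ ($l\ge 2$, $v_{i_1},\dots,v_{i_l}$ distinct), with transformation $\mathbf{R}_{i_1i_2}\mathbf{R}_{i_2i_3}\cdots\mathbf{R}_{i_li_1}$. The MWN $G$ is called coherent if the transformation of every directed cycle is $\mathbf{I}$ (in particular, taking 2-cycles, all $\mathbf{R}_{ij}$ are then orthogonal). *)

From HB Require Import structures.
From mathcomp Require Import all_boot all_order all_algebra.
From mathcomp Require Import boolp classical_sets reals.
Set Implicit Arguments. Unset Strict Implicit. Unset Printing Implicit Defensive.
Import Order.TTheory GRing.Theory Num.Theory.
Local Open Scope ring_scope.

Section MWN.
Variables (R : realType) (n nd : nat).

Definition vnorm2 (x : 'cV[R]_nd) : R := Num.sqrt (\sum_(i < nd) x i 0 ^+ 2).

Definition spec_norm (M : 'M[R]_nd) : R :=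
  sup [set r : R | exists x : 'cV[R]_nd, vnorm2 x <= 1 /\ r = vnorm2 (M *m x)].

Variable W : 'I_n -> 'I_n -> 'M[R]_nd.

Definition mwn_edge : rel 'I_n := fun i j => W i j != 0.

Definition mwn_w (i j : 'I_n) : R := spec_norm (W i j).
Definition mwn_R (i j : 'I_n) : 'M[R]_nd := (mwn_w i j)^-1 *: W i j.

End MWN.

Definition is_dcycle (T : eqType) (e : rel T) (s : seq T) : bool :=
  [&& uniq s, (1 < size s)%N & cycle e s].

Definition cycle_pairs (T : Type) (s : seq T) : seq (T * T) :=
  if s is x :: s' then zip s (rcons s' x) else [::].

Definition cycle_transf (R : ringType) (nd : nat) (T : Type)
    (Rf : T -> T -> 'M[R]_nd) (s : seq T) : 'M[R]_nd :=
  foldr (fun p M => Rf p.1 p.2 *m M) 1%:M (cycle_pairs s).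

Definition coherent (R : realType) (n nd : nat) (W : 'I_n -> 'I_n -> 'M[R]_nd) : Prop :=
  forall s : seq 'I_n, is_dcycle (mwn_edge W) s -> cycle_transf (mwn_R W) s = 1%:M.

Definition super_edge (n : nat) (e : rel 'I_n) : rel {set 'I_n} :=
  fun A B => (A != B) && [exists ij : 'I_n * 'I_n, [&& ij.1 \in A, ij.2 \in B & e ij.1 ij.2]].

(* The transformation carried by the super edge A -> B: the transformation of
   some edge from A to B (well-defined under condition (ii)). *)
Definition super_R (R : realType) (n nd : nat) (W : 'I_n -> 'I_n -> 'M[R]_nd)
    (A B : {set 'I_n}) : 'M[R]_nd :=
  match [pick ij : 'I_n * 'I_n | [&& ij.1 \in A, ij.2 \in B & mwn_edge W ij.1 ij.2]] with
  | Some ij => mwn_R W ij.1 ij.2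
  | None => 0
  end.

From HB Require Import structures.
From mathcomp Require Import all_boot all_order all_algebra.
From mathcomp Require Import reals.
From mathcomp Require Import zify.
Import Order.TTheory GRing.Theory Num.Theory.
Local Open Scope ring_scope.
Set Implicit Arguments. Unset Strict Implicit.

(* If G is coherent, the partition into singletons works: (i) and (ii) are
   vacuous and (iii) is coherence itself.  Conversely, contract every part to
   a super node, turning the edges inside a part into self-loops carrying I.
   By (i) and (ii), a directed cycle of G maps to a closed walk of super nodes
   with the same transformation.  A closed walk that repeats a node splits into
   two shorter closed walks, so by induction every closed walk of super nodes
   has transformation I as soon as every simple one does, which is (iii). *)

Fixpoint walk_transf (K : nzRingType) (nd : nat) (T : Type)
    (f : T -> T -> 'M[K]_nd) (x : T) (p : seq T) : 'M[K]_nd :=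
  if p is y :: p' then f x y *m walk_transf f y p' else 1%:M.

Section WalkTransf.
Variables (K : nzRingType) (nd : nat) (T : Type) (f : T -> T -> 'M[K]_nd).

Lemma walk_transf_cat x p q :
  walk_transf f x (p ++ q) = walk_transf f x p *m walk_transf f (last x p) q.
Proof. by elim: p x => [|y p IHp] x /=; rewrite ?mul1mx // IHp mulmxA. Qed.

Lemma cycle_transfE x p : cycle_transf f (x :: p) = walk_transf f x (rcons p x).
Proof.
rewrite /cycle_transf /=.
suff zipE y : foldr (fun q M => f q.1 q.2 *m M) 1%:M (zip (y :: p) (rcons p x))
              = walk_transf f y (rcons p x) by apply: zipE.
by elim: p y => [|z p IHp] y //=; rewrite IHp.
Qed.

Lemma eq_walk_transf (e : rel T) (g : T -> T -> 'M[K]_nd) x p :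
  (forall y z, e y z -> f y z = g y z) -> path e x p ->
  walk_transf f x p = walk_transf g x p.
Proof.
move=> eq_fg; elim: p x => [|y p IHp] x //= /andP[exy ep].
by rewrite eq_fg // IHp.
Qed.

Lemma walk_transf_map (S : Type) (h : S -> T) x p :
  walk_transf f (h x) (map h p) = walk_transf (fun y z => f (h y) (h z)) x p.
Proof. by elim: p x => [|y p IHp] x //=; rewrite IHp. Qed.

End WalkTransf.

Lemma not_uniq_split (T : eqType) (s : seq T) :
  ~~ uniq s -> exists u b v w, s = u ++ b :: v ++ b :: w.
Proof.
elim: s => [|x s IHs] //=; rewrite negb_and negbK => /orP[/splitPr[v w] | ].
  by exists [::], x, v, w.
by case/IHs => u [b [v [w ->]]]; exists (x :: u), b, v, w.
Qed.

Section ClosedWalks.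
Variables (K : nzRingType) (nd : nat) (T : eqType).
Variables (e : rel T) (Q : pred T) (f : T -> T -> 'M[K]_nd).
Hypothesis f_diag : forall x, f x x = 1%:M.
Hypothesis dcycle_transf1 :
  forall s, all Q s -> is_dcycle e s -> cycle_transf f s = 1%:M.

Lemma closed_walk_transf x p :
  all Q (x :: p) -> path e x p -> last x p = x -> walk_transf f x p = 1%:M.
Proof.
have [k] := ubnP (size p); elim: k x p => // k IHk x p.
have [uniq_p _ | /not_uniq_split[u [b [v [w ->]]]]] := boolP (uniq p).
  case/lastP: p uniq_p => [|q y] // uniq_p.
  rewrite last_rcons => Qp ep y_x; subst y.
  case: q => [|z q] in uniq_p Qp ep *; first by rewrite /= f_diag mulmx1.
  rewrite -cycle_transfE; apply: dcycle_transf1.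
    by move: Qp; rewrite /= all_rcons => /and3P[-> -> /andP[_ ->]].
  by rewrite /is_dcycle cons_uniq -rcons_uniq uniq_p.
rewrite -!cat_rcons !size_cat !size_rcons /= !all_cat !all_rcons.
rewrite !cat_path !last_cat !last_rcons ltnS.
move=> lt_k /andP[Qx /and3P[/andP[Qb Qu] /andP[_ Qv] Qw]] /and3P[eu ev ew] lastw.
have loop_b : walk_transf f b (rcons v b) = 1%:M.
  by apply: IHk; rewrite ?size_rcons ?last_rcons //= ?all_rcons ?Qb ?Qv //; lia.
have := IHk x (rcons u b ++ w).
rewrite !walk_transf_cat !last_rcons loop_b mul1mx => -> //.
- by rewrite size_cat size_rcons; lia.
- by rewrite /= all_cat all_rcons Qx Qb Qu Qw.
- by rewrite cat_path last_rcons eu ew.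
- by rewrite last_cat last_rcons.
Qed.

End ClosedWalks.

Section SimpleCycles.
Variable T : eqType.

Lemma dcycle_neq (e : rel T) s : is_dcycle e s -> cycle [rel x y | x != y] s.
Proof.
case: s => [|x p] // /and3P[uniq_s size_s _].
have neq_p : path [rel x y | x != y] x p.
  by apply: (pairwise_sorted (s := x :: p)); rewrite -uniq_pairwise.
rewrite /= rcons_path neq_p /=.
case/lastP: p uniq_s size_s {neq_p} => [|q y] // uniq_s _.
move: uniq_s; rewrite last_rcons /= mem_rcons in_cons negb_or eq_sym.
by case/andP=> /andP[].
Qed.

Lemma sub_dcycle_neq (e1 e2 : rel T) s :
  (forall x y, x != y -> e1 x y -> e2 x y) -> is_dcycle e1 s -> is_dcycle e2 s.
Proof.
move=> sub12 dc; have := dcycle_neq dc.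
rewrite /is_dcycle; case/and3P: dc => -> -> /=.
case: s => [|x p] //= e1p neqp.
have := path_relI [rel x y | x != y] e1 x (rcons p x); rewrite neqp e1p.
by apply: sub_path => y z /andP[]; apply: sub12.
Qed.

Lemma eq_cycle_transf_dcycle (K : nzRingType) nd (e : rel T)
    (f g : T -> T -> 'M[K]_nd) s :
  (forall x y, x != y -> f x y = g x y) -> is_dcycle e s ->
  cycle_transf f s = cycle_transf g s.
Proof.
move=> eq_fg /dcycle_neq; case: s => [|x p] // neqp.
by rewrite !cycle_transfE; apply: (eq_walk_transf _ neqp).
Qed.

End SimpleCycles.

Section Contraction.
Variables (R : realType) (n nd : nat) (W : 'I_n -> 'I_n -> 'M[R]_nd).
Local Notation E := (mwn_edge W).

Definition block_edge (A B : {set 'I_n}) : bool := (A == B) || super_edge E A B.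

Definition block_transf (A B : {set 'I_n}) : 'M[R]_nd :=
  if A == B then 1%:M else super_R W A B.

Variable P : {set {set 'I_n}}.
Hypothesis partP : partition P [set: 'I_n].
Hypothesis transf_in_block : forall A, A \in P ->
  forall i j, i \in A -> j \in A -> E i j -> mwn_R W i j = 1%:M.
Hypothesis transf_between_blocks : forall A B, A \in P -> B \in P ->
  forall i j i' j', i \in A -> j \in B -> i' \in A -> j' \in B ->
  E i j -> E i' j' -> mwn_R W i j = mwn_R W i' j'.
Hypothesis super_dcycle_transf : forall S : seq {set 'I_n}, {subset S <= P} ->
  is_dcycle (super_edge E) S -> cycle_transf (super_R W) S = 1%:M.

Let cover_partP i : i \in cover P.
Proof. by case/and3P: partP => /eqP ->; rewrite inE. Qed.

Let pblockP i : pblock P i \in P.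
Proof. exact: pblock_mem. Qed.

Let mem_own_pblock i : i \in pblock P i.
Proof. by rewrite mem_pblock. Qed.

Lemma block_edge_pblock i j : E i j -> block_edge (pblock P i) (pblock P j).
Proof.
move=> eij; rewrite /block_edge /super_edge; case: eqP => //= _.
by apply/existsP; exists (i, j); rewrite /= !mem_own_pblock.
Qed.

Lemma mwn_R_pblock i j :
  E i j -> mwn_R W i j = block_transf (pblock P i) (pblock P j).
Proof.
move=> eij; rewrite /block_transf; case: eqP => [eq_ij | _].
  by apply: (transf_in_block (pblockP i)); rewrite // eq_ij.
rewrite /super_R; case: pickP => [[i' j'] /and3P[/= i'i j'j ei'j'] | /(_ (i, j))].
  exact: (transf_between_blocks (pblockP i) (pblockP j)).
by rewrite /= !mem_own_pblock eij.
Qed.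

Lemma block_dcycle_transf S : all (mem P) S -> is_dcycle block_edge S ->
  cycle_transf block_transf S = 1%:M.
Proof.
move=> /allP SP dcS; rewrite (eq_cycle_transf_dcycle (g := super_R W) _ dcS).
  apply: super_dcycle_transf => //; apply: sub_dcycle_neq dcS => A B.
  by rewrite /block_edge => /negbTE ->.
by move=> A B; rewrite /block_transf => /negbTE ->.
Qed.

Lemma coherent_of_partition : coherent W.
Proof.
move=> [|i p] // /and3P[_ _ ep]; rewrite cycle_transfE.
pose g i j := block_transf (pblock P i) (pblock P j).
rewrite (eq_walk_transf (g := g) mwn_R_pblock ep) -walk_transf_map.
apply: (closed_walk_transf (e := block_edge) (Q := mem P)).
- by move=> A; rewrite /block_transf eqxx.
- exact: block_dcycle_transf.
- by rewrite -map_cons; apply/allP => _ /mapP[j _ ->]; apply: pblockP.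
- by rewrite path_map; apply: sub_path ep => j k; apply: block_edge_pblock.
- by rewrite last_map last_rcons.
Qed.

End Contraction.

Section Singletons.
Variable T : finType.

Lemma singleton_partition : partition [set [set x] | x : T] [set: T].
Proof.
rewrite (_ : imset _ _ = preim_partition id [set: T]); first exact: preim_partitionP.
apply/setP => A; apply/imsetP/imsetP => -[x _ ->]; exists x => //.
  all: by apply/setP => y; rewrite !inE eq_sym.
Qed.

Lemma singleton_eq A x y :
  A \in [set [set z] | z : T] -> x \in A -> y \in A -> x = y.
Proof. by case/imsetP=> z _ -> /set1P -> /set1P ->. Qed.

Lemma seq_of_singletons (S : seq {set T}) : {subset S <= [set [set x] | x : T]} ->
  exists s, S = [seq [set x] | x <- s].
Proof.
elim: S => [|A S IHS] S1; first by exists [::].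
have /imsetP[x _ ->] := S1 A (mem_head A S).
have [s ->] := IHS (fun B SB => S1 B (mem_behead (s := A :: S) SB)).
by exists (x :: s).
Qed.

End Singletons.

Lemma super_edge_set1 n (e : rel 'I_n) i j :
  irreflexive e -> super_edge e [set i] [set j] = e i j.
Proof.
move=> irr_e; apply/andP/idP => [[_ /existsP[[i' j']]] | eij].
  by case/and3P=> /set1P/= -> /set1P/= ->.
split; last by apply/existsP; exists (i, j); rewrite /= !set11.
by apply: contraTneq eij => /set1_inj ->; rewrite irr_e.
Qed.

Section SingletonSupernodes.
Variables (R : realType) (n nd : nat) (W : 'I_n -> 'I_n -> 'M[R]_nd).
Hypothesis Wloop : forall i, W i i = 0.
Local Notation E := (mwn_edge W).

Let E_irrefl : irreflexive E.
Proof. by move=> i; rewrite /mwn_edge Wloop eqxx. Qed.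

Lemma super_R_set1 i j : E i j -> super_R W [set i] [set j] = mwn_R W i j.
Proof.
move=> eij; rewrite /super_R; case: pickP => [[i' j'] | /(_ (i, j))].
  by case/and3P=> /set1P/= -> /set1P/= ->.
by rewrite /= !set11 eij.
Qed.

Lemma singleton_super_dcycle_transf : coherent W ->
  forall S, {subset S <= [set [set i] | i : 'I_n]} ->
  is_dcycle (super_edge E) S -> cycle_transf (super_R W) S = 1%:M.
Proof.
move=> cohW S /seq_of_singletons[[|i p] ->] //.
rewrite /is_dcycle size_map (map_inj_uniq set1_inj) cycle_map.
rewrite (eq_cycle (e' := E)) => [dc | i' j']; last exact: super_edge_set1.
rewrite cycle_transfE -map_rcons walk_transf_map.
rewrite (eq_walk_transf (g := mwn_R W) super_R_set1) -?cycle_transfE ?cohW //.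
by case/and3P: dc.
Qed.

End SingletonSupernodes.

Unset Implicit Arguments.

Theorem theorem1 (R : realType) (n nd : nat) (W : 'I_n -> 'I_n -> 'M[R]_nd)
  (Wsym : forall i j, W i j = (W j i)^T)
  (Wloop : forall i, W i i = 0)
  (Wconn : forall i j, connect (mwn_edge W) i j) :
  coherent W <->
  exists P : {set {set 'I_n}},
    [/\ finset.partition P [set: 'I_n],
        (forall A, A \in P -> forall i j, i \in A -> j \in A ->
           mwn_edge W i j -> mwn_R W i j = 1%:M),
        (forall A B, A \in P -> B \in P -> forall i j i' j',
           i \in A -> j \in B -> i' \in A -> j' \in B ->
           mwn_edge W i j -> mwn_edge W i' j' -> mwn_R W i j = mwn_R W i' j')
      & (forall S : seq {set 'I_n}, {subset S <= P} ->
           is_dcycle (super_edge (mwn_edge W)) S ->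
           cycle_transf (super_R W) S = 1%:M)].
Proof.
split=> [cohW | [P [partP in_block between_blocks super_cycle]]]; last first.
  exact: coherent_of_partition partP in_block between_blocks super_cycle.
exists [set [set i] | i : 'I_n]; split.
- exact: singleton_partition.
- move=> A A1 i j iA jA.
  by rewrite (singleton_eq A1 iA jA) /mwn_edge Wloop eqxx.
- move=> A B A1 B1 i j i' j' iA jB i'A j'B _ _.
  by rewrite (singleton_eq A1 iA i'A) (singleton_eq B1 jB j'B).
- exact: singleton_super_dcycle_transf.
Qed.
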